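(* Let $A \in \mathbb{R}^{n \times r}$ and $B \in \mathbb{R}^{r \times n}$ be matrices of rank $n$. The following are equivalent: (i) $\sigma(\ker(A)) \cap \sigma(\mathrm{im}(B)) = \{0\}$; (ii) for all $J\subseteq [r]$ of cardinality $n$, the product $\det(A_{[n],J})\det(B_{J,[n]})$ either is zero or has the same sign as all other nonzero such products, and at least one such product is nonzero.
   Context: $[n]=\{1,\dots,n\}$; $A_{[n],J}$ is the submatrix of $A$ with columns in $J$, $B_{J,[n]}$ the submatrix of $B$ with rows in $J$. $\sigma$ is the componentwise sign vector in $\{-,0,+\}^r$, $\sigma(T)=\{\sigma(x)\mid x\in T\}$, and $0$ denotes the zero sign vector. *)

From HB Require Import structures.
From mathcomp Require Import all_boot all_order all_algebra.
Set Implicit Arguments. Unset Strict Implicit. Unset Printing Implicit Defensive.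
Import Order.TTheory GRing.Theory Num.Theory.
Local Open Scope ring_scope.

(* Componentwise sign vector of a column vector x in R^r, with values in
   {-1,0,1} (encoding {-,0,+}). *)
Definition sgvec (R : realDomainType) (r : nat) (x : 'cV[R]_r) : {ffun 'I_r -> int} :=
  [ffun i => sgz (x i ord0)].

Definition sgvec0 (r : nat) : {ffun 'I_r -> int} := [ffun _ => 0%R].

Definition sg_ker (R : realDomainType) (n r : nat) (A : 'M[R]_(n, r)) :
  {ffun 'I_r -> int} -> Prop :=
  fun s => exists x : 'cV[R]_r, A *m x = 0 /\ sgvec x = s.

Definition sg_im (R : realDomainType) (n r : nat) (B : 'M[R]_(r, n)) :
  {ffun 'I_r -> int} -> Prop :=
  fun s => exists y : 'cV[R]_n, sgvec (B *m y) = s.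

Definition idxJ (n r : nat) (J : {set 'I_r}) (HJ : #|J| = n) : 'I_n -> 'I_r :=
  fun k => enum_val (cast_ord (esym HJ) k).

Definition JProd (R : comNzRingType) (n r : nat) (A : 'M[R]_(n, r)) (B : 'M[R]_(r, n))
  (J : {set 'I_r}) (HJ : #|J| = n) : R :=
  \det (colsub (idxJ HJ) A) * \det (rowsub (idxJ HJ) B).

(* For a positive vector d write D = diag(d).  The proof has three parts.
   1. Cauchy--Binet: det(A D B) = sum_J P_J prod_{j in J} d_j, where
      P_J = det(A_{[n],J}) det(B_{J,[n]}) for #|J| = n and P_J = 0 otherwise.
   2. Condition (i) holds iff det(A D B) <> 0 for every positive d: a kernel
      vector y of A D B gives x = D B y in ker A with the sign vector of B y,
      and conversely a common nonzero sign vector of x in ker A and B y in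
      im B gives a positive d with D B y = x.
   3. For a homogeneous multiaffine polynomial F(d) = sum_J c_J prod_J d_j,
      F has no zero in the open positive orthant iff its nonzero coefficients
      all share one sign and one of them is nonzero.  One direction is
      termwise; for the other, each coefficient c_J dominates F near the point
      that is 1 on J and small elsewhere, and a sign change of F between two
      positive points produces a positive zero by moving one coordinate at a
      time, F being affine in each coordinate.
   The theorem is 2, then 1, then 3 applied to the coefficients P_J. *)

From HB Require Import structures.
From mathcomp Require Import all_boot all_order all_algebra all_fingroup.
From mathcomp Require Import ring lra.
Import Order.TTheory GRing.Theory Num.Theory.
Local Open Scope ring_scope.

Definition diagw {R : nzRingType} {k : nat} (d : 'I_k -> R) : 'M[R]_k :=
  diag_mx (\row_j d j).

Section CauchyBinet.
Context {R : comNzRingType} {n r : nat}.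
Implicit Types (A : 'M[R]_(n, r)) (B : 'M[R]_(r, n)) (J : {set 'I_r}).

Definition minor_prod A B J : R :=
  match #|J| =P n with ReflectT HJ => JProd A B HJ | ReflectF _ => 0 end.

Lemma minor_prodE A B J (HJ : #|J| = n) : minor_prod A B J = JProd A B HJ.
Proof.
rewrite /minor_prod; case: eqP => [HJ'|]; last by rewrite HJ.
by rewrite (eq_irrelevance HJ' HJ).
Qed.

Lemma minor_prod_card A B J : #|J| != n -> minor_prod A B J = 0.
Proof. by rewrite /minor_prod; case: eqP. Qed.

Lemma minor_prod_neq0_card A B J : minor_prod A B J != 0 -> #|J| = n.
Proof. by apply: contraNeq => /minor_prod_card ->. Qed.

(* Multilinearity of the determinant in the rows of A *m B: the determinant
   is a sum over all maps f : [n] -> [r] of row-selections of B. *)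
Lemma det_mulmx_expand A B :
  \det (A *m B) = \sum_(f : {ffun 'I_n -> 'I_r}) (\prod_i A i (f i)) * \det (rowsub f B).
Proof.
transitivity (\sum_(s : 'S_n) \sum_(f : {ffun 'I_n -> 'I_r})
   (-1) ^+ s * \prod_i (A i (f i) * B (f i) (s i))).
  apply: eq_bigr => s _; rewrite -big_distrr /=; congr (_ * _).
  rewrite -(bigA_distr_bigA (fun i k => A i k * B k (s i))) /=.
  by apply: eq_bigr => i _; rewrite mxE.
rewrite exchange_big; apply: eq_bigr => f _ /=.
rewrite big_distrr /=; apply: eq_bigr => s _.
rewrite big_split /= mulrCA; congr (_ * (_ * _)).
by apply: eq_bigr => i _; rewrite mxE.
Qed.

Lemma det_rowsub_noninj B (f : 'I_n -> 'I_r) :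
  ~~ injectiveb f -> \det (rowsub f B) = 0.
Proof.
case/injectivePn => i1 [i2 Di12 Ef12].
by apply: (determinant_alternate Di12) => j; rewrite !mxE Ef12.
Qed.

Definition nsubset := {J in [pred J : {set 'I_r} | #|J| == n]}.

Definition card_nsubset (J : nsubset) : #|val J| = n := eqP (valP J).

Definition enum_nsubset (J : nsubset) : 'I_n -> 'I_r := idxJ (card_nsubset J).

Lemma enum_nsubset_inj (J : nsubset) : injective (enum_nsubset J).
Proof. by move=> i j /enum_val_inj /cast_ord_inj. Qed.

Lemma enum_nsubset_image (J : nsubset) : [set enum_nsubset J i | i : 'I_n] = val J.
Proof.
apply/setP => j; apply/imsetP/idP => [[i _ ->]|jJ]; first exact: enum_valP.
exists (cast_ord (card_nsubset J) (enum_rank_in jJ j)) => //.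
by rewrite /enum_nsubset /idxJ cast_ordK enum_rankK_in.
Qed.

(* Every injective map [n] -> [r] is uniquely an enumerated n-subset
   composed with a permutation of [n]. *)
Definition inj_of_pair (p : nsubset * 'S_n) : {ffun 'I_n -> 'I_r} :=
  [ffun i => enum_nsubset p.1 (p.2 i)].

Lemma inj_of_pair_image (p : nsubset * 'S_n) :
  [set inj_of_pair p i | i : 'I_n] = val p.1.
Proof.
rewrite -enum_nsubset_image; apply/setP => j.
apply/imsetP/imsetP => -[i _ ->]; first by exists (p.2 i); rewrite ?ffunE.
by exists (p.2^-1 i)%g; rewrite ?ffunE ?permKV.
Qed.

Lemma inj_of_pair_inj : injective inj_of_pair.
Proof.
move=> [J s] [J' s'] E.
have EJ : J = J' by apply: val_inj; rewrite -(inj_of_pair_image (J, s)) E inj_of_pair_image.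
subst J'; congr (_, _); apply/permP => i.
by move/ffunP: E => /(_ i); rewrite !ffunE => /enum_nsubset_inj.
Qed.

Lemma inj_of_pair_onto :
  inj_of_pair @: setT = [set f : {ffun 'I_n -> 'I_r} | injectiveb f].
Proof.
apply/eqP; rewrite eqEcard; apply/andP; split.
  apply/subsetP => _ /imsetP [p _ ->]; rewrite inE.
  by apply/injectiveP => i j; rewrite !ffunE => /enum_nsubset_inj /perm_inj.
rewrite card_inj_ffuns card_imset; last exact: inj_of_pair_inj.
rewrite cardsT card_prod card_sig card_Sn !card_ord -bin_ffact.
rewrite -[in 'C(r, n)](card_ord r) -(card_draws 'I_r n) -cardsE.
by rewrite leq_mul2r; apply/orP; right; apply: eq_leq; apply: eq_card => J; rewrite !inE.
Qed.

Theorem cauchy_binet A B : \det (A *m B) = \sum_J minor_prod A B J.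
Proof.
rewrite det_mulmx_expand (bigID (fun f : {ffun _} => injectiveb f)) /=.
rewrite [X in _ + X]big1 ?addr0; last by move=> f /det_rowsub_noninj ->; rewrite mulr0.
transitivity (\sum_(f in inj_of_pair @: setT) (\prod_i A i (f i)) * \det (rowsub f B)).
  by apply: eq_bigl => f; rewrite inj_of_pair_onto inE.
rewrite big_imset /=; last by move=> p q _ _; apply: inj_of_pair_inj.
transitivity (\sum_(J : nsubset) \sum_(s : 'S_n)
    (\prod_i A i (inj_of_pair (J, s) i)) * \det (rowsub (inj_of_pair (J, s)) B)).
  by rewrite pair_bigA; apply: eq_bigl => p; rewrite inE.
rewrite [RHS](bigID (fun J => #|J| == n)) /= [X in _ + X]big1 ?addr0; last first.
  by move=> J /minor_prod_card.
rewrite (big_sub [pred J : {set 'I_r} | #|J| == n]) /=; apply: eq_bigr => J _.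
rewrite (minor_prodE A B _ (card_nsubset J)) /JProd -/(enum_nsubset J).
have rowsub_perm s : rowsub (inj_of_pair (J, s)) B = row_perm s (rowsub (enum_nsubset J) B).
  by apply/matrixP => i j; rewrite !mxE ffunE.
rewrite [\det (colsub _ _)]/determinant big_distrl /=; apply: eq_bigr => s _.
rewrite rowsub_perm row_permE det_mulmx det_perm mulrCA mulrA; congr (_ * _ * _).
by apply: eq_bigr => i _; rewrite !mxE ffunE.
Qed.

Lemma cauchy_binet_weighted A B (d : 'I_r -> R) :
  \det (A *m diagw d *m B) = \sum_J minor_prod A B J * \prod_(j in J) d j.
Proof.
rewrite cauchy_binet; apply: eq_bigr => J _.
have [/eqP HJ|HJ] := boolP (#|J| == n); last by rewrite !minor_prod_card ?mul0r.
rewrite !(minor_prodE _ _ _ HJ) /JProd.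
have -> : colsub (idxJ HJ) (A *m diagw d) = colsub (idxJ HJ) A *m diagw (d \o idxJ HJ).
  by apply/matrixP => i k; rewrite !mul_mx_diag !mxE.
rewrite det_mulmx det_diag mulrAC; congr (_ * _).
rewrite (big_enum_val (fun j => d j)) /=.
rewrite (reindex (cast_ord (esym HJ))) /=; last first.
  by exists (cast_ord HJ) => k _; [apply: cast_ordKV | apply: cast_ordK].
by apply: eq_bigr => k _; rewrite mxE.
Qed.

End CauchyBinet.

Section Multiaffine.
Context {R : realFieldType} {r : nat}.
Implicit Types (d p q : 'I_r -> R) (j : 'I_r).

Definition upd d j (t : R) : 'I_r -> R := fun i => if i == j then t else d i.

Definition posv d : Prop := forall j, 0 < d j.

Lemma posv_upd d j t : posv d -> 0 < t -> posv (upd d j t).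
Proof. by move=> pd t0 i; rewrite /upd; case: eqP. Qed.

Lemma affine_root (a b t0 t1 : R) : 0 < t0 -> 0 < t1 ->
  (a + b * t0) * (a + b * t1) < 0 -> exists2 u, 0 < u & a + b * u = 0.
Proof.
move=> t0_gt0 t1_gt0 sign_change.
have b_neq0 : b != 0.
  by apply: contraTneq sign_change => ->; rewrite !mul0r !addr0 -expr2 ltNge sqr_ge0.
pose u := - a / b.
have Ea : a = - (b * u) by rewrite /u mulrCA mulfV // mulr1 opprK.
exists u; last by rewrite Ea addNr.
have E t t' : (a + b * t) * (a + b * t') = (b * b) * ((t - u) * (t' - u)) by rewrite Ea; ring.
rewrite ltNge; apply: contraTN sign_change => u_le0; rewrite E -leNgt.
apply: mulr_ge0; first by rewrite -expr2 sqr_ge0.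
by apply: mulr_ge0; rewrite subr_ge0; apply: le_trans u_le0 _; apply: ltW.
Qed.

Lemma sign_change_split (x y z : R) : x * z < 0 -> [\/ y = 0, y * z < 0 | x * y < 0].
Proof.
move=> xz_lt0; have [->|y_neq0] := eqVneq y 0; first by constructor 1.
have [yz_lt0|yz_ge0] := ltrP (y * z) 0; first by constructor 2.
constructor 3.
have z_neq0 : z != 0 by apply: contraTneq xz_lt0 => ->; rewrite mulr0 ltxx.
have yz_gt0 : 0 < y * z by rewrite lt_def mulf_neq0.
have E : (x * y) * (y * z) = (x * z) * (y * y) by ring.
have : (x * z) * (y * y) < 0 by rewrite nmulr_rlt0 // lt_def mulf_neq0 //= -expr2 sqr_ge0.
by rewrite -E pmulr_llt0.
Qed.

Lemma mul_lt0_of_sg_neq {x y : R} : x != 0 -> y != 0 -> Num.sg x != Num.sg y -> x * y < 0.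
Proof.
case: (ltrgt0P x) => [x_gt0|x_lt0|->]; case: (ltrgt0P y) => [y_gt0|y_lt0|->] //;
  rewrite ?eqxx ?(gtr0_sg x_gt0) ?(ltr0_sg x_lt0) ?(gtr0_sg y_gt0) ?(ltr0_sg y_lt0) ?eqxx //.
all: by move=> _ _ _; nra.
Qed.

Section Root.
Variable f : ('I_r -> R) -> R.
Hypothesis f_ext : forall d d', d =1 d' -> f d = f d'.
Hypothesis f_affine : forall d j, exists a b, forall t, f (upd d j t) = a + b * t.

Lemma coordinate_root p j t : posv p -> 0 < t ->
  f p * f (upd p j t) < 0 -> exists2 d, posv d & f d = 0.
Proof.
move=> pp t_gt0; have [a [b Ef]] := f_affine p j.
have -> : f p = a + b * p j by rewrite -Ef; apply: f_ext => i; rewrite /upd; case: eqP => // ->.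
rewrite Ef => /affine_root [] // u u_gt0 root_u.
by exists (upd p j u); [exact: posv_upd | rewrite Ef].
Qed.

(* A sign change between two positive points yields a positive root: move
   from p to q one coordinate at a time. *)
Lemma positive_root p q : posv p -> posv q -> f p * f q < 0 ->
  exists2 d, posv d & f d = 0.
Proof.
move=> pp pq.
suff agree_from k p' : posv p' -> (forall j : 'I_r, (k <= j)%N -> p' j = q j) ->
    f p' * f q < 0 -> exists2 d, posv d & f d = 0.
  by apply: (agree_from r p) => // j; rewrite leqNgt ltn_ord.
elim: k p' => [|k IHk] p' pp' agree sign.
  by move: sign; rewrite (@f_ext p' q (fun j => agree j (leq0n j))) -expr2 ltNge sqr_ge0.
have [k_lt_r|r_le_k] := ltnP k r; last first.
  apply: IHk sign => // j k_le_j.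
  by have := leq_trans (ltn_ord j) r_le_k; rewrite ltnNge k_le_j.
pose jk := Ordinal k_lt_r; pose p'' := upd p' jk (q jk).
have pp'' : posv p'' by apply: posv_upd.
have agree'' j : (k <= j)%N -> p'' j = q j.
  rewrite /p'' /upd; case: eqP => [-> //|j_neq_k k_le_j]; apply: agree.
  by rewrite ltn_neqAle k_le_j andbT; apply/eqP => k_eq_j; apply/j_neq_k/val_inj.
have [root|sign''|sign'] := sign_change_split _ (f p'') _ sign.
- by exists p''.
- exact: IHk sign''.
- exact: coordinate_root sign'.
Qed.

End Root.

Section SubsetPolynomial.
Variable c : {set 'I_r} -> R.

Definition subset_poly d : R := \sum_(J : {set 'I_r}) c J * \prod_(j in J) d j.

Lemma subset_poly_ext d d' : d =1 d' -> subset_poly d = subset_poly d'.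
Proof.
by move=> Ed; apply: eq_bigr => J _; congr (_ * _); apply: eq_bigr => j _; rewrite Ed.
Qed.

(* Each monomial is affine in each variable, hence so is F. *)
Lemma subset_poly_affine d j0 :
  exists a b, forall t, subset_poly (upd d j0 t) = a + b * t.
Proof.
exists (\sum_(J : {set 'I_r}) (if j0 \in J then 0 else c J * \prod_(j in J) d j)).
exists (\sum_(J : {set 'I_r}) (if j0 \in J then c J * \prod_(j in J :\ j0) d j else 0)).
move=> t; rewrite /subset_poly big_distrl /= -big_split /=; apply: eq_bigr => J _.
case: ifP => j0J.
  rewrite (bigD1 j0 j0J) /= {1}/upd eqxx add0r mulrCA [RHS]mulrC; congr (_ * (_ * _)).
  apply: eq_big => [i|i]; first by rewrite !inE andbC.
  by rewrite /upd; case: eqP => //= _; rewrite andbF.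
rewrite mul0r addr0; congr (_ * _); apply: eq_bigr => i iJ; rewrite /upd.
by case: eqP => // Ei; move: j0J; rewrite -Ei iJ.
Qed.

(* If all nonzero coefficients have the same sign, and one of them is nonzero,
   then F does not vanish on the positive orthant: every term has the sign of
   that coefficient, and one term is strictly nonzero. *)
Lemma subset_poly_neq0
    (same_sign : forall J1 J2, c J1 != 0 -> c J2 != 0 -> Num.sg (c J1) = Num.sg (c J2))
    J0 (cJ0_neq0 : c J0 != 0) d :
  posv d -> subset_poly d != 0.
Proof.
move=> pd; have prod_gt0 (J : {set 'I_r}) : 0 < \prod_(j in J) d j.
  by apply: prodr_gt0 => j _; apply: pd.
suff : 0 < Num.sg (c J0) * subset_poly d.
  by apply: contraTneq => ->; rewrite mulr0 ltxx.
rewrite /subset_poly big_distrr /= (bigD1 J0) //= ltr_pwDl //.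
  by rewrite mulrA -normrEsg mulr_gt0 ?normr_gt0.
apply: sumr_ge0 => J _; have [->|cJ_neq0] := eqVneq (c J) 0; first by rewrite !mul0r mulr0.
by rewrite (same_sign J0 J) // mulrA -normrEsg mulr_ge0 ?normr_ge0 ?ltW.
Qed.

(* Conversely, for a homogeneous F of degree n, the sign of any nonzero
   coefficient c_{J1} is attained by F on the positive orthant: take d = 1 on
   J1 and d small elsewhere, so that c_{J1} dominates all other terms. *)
Variable n : nat.
Hypothesis c_homogeneous : forall J : {set 'I_r}, #|J| != n -> c J = 0.

Lemma small_off_subset_prod (J1 J : {set 'I_r}) (e : R) : 0 < e <= 1 ->
  ~~ (J \subset J1) -> \prod_(j in J) (if j \in J1 then 1 else e) <= e.
Proof.
case/andP=> e_gt0 e_le1 /subsetPn [j jJ jJ1]; rewrite (bigD1 j jJ) /= (negPf jJ1).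
rewrite -[leRHS]mulr1 ler_wpM2l ?(ltW e_gt0) //; apply: prodr_ile1 => i _.
by case: ifP; rewrite ?ler01 ?lexx // (ltW e_gt0).
Qed.

Lemma subset_poly_dominant J1 : c J1 != 0 ->
  exists2 p, posv p & 0 < c J1 * subset_poly p.
Proof.
move=> cJ1_neq0.
have card_J1 : #|J1| = n by apply/eqP; apply: contraNT cJ1_neq0 => /c_homogeneous ->.
pose a := `|c J1|; pose S := \sum_J `|c J|.
have a_gt0 : 0 < a by rewrite normr_gt0.
have a_le_S : a <= S by rewrite /S (bigD1 J1) //= lerDl sumr_ge0.
have S_gt0 : 0 < S := lt_le_trans a_gt0 a_le_S.
pose e := a / (2 * S).
have e_gt0 : 0 < e by rewrite divr_gt0 // mulr_gt0.
have eS : e * S = a / 2 by rewrite /e invfM mulrA mulfVK // gt_eqF.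
have e_le1 : e <= 1 by nra.
pose p j := if j \in J1 then 1 else e.
exists p; first by move=> j; rewrite /p; case: ifP.
have prod_J1 : \prod_(j in J1) p j = 1 by apply: big1 => j jJ1; rewrite /p jJ1.
rewrite /subset_poly (bigD1 J1) //= prod_J1 mulr1.
set rest := \sum_(J | J != J1) _.
have rest_small : `|rest| <= a / 2.
  rewrite -eS (le_trans (ler_norm_sum _ _ _)) //.
  apply: (@le_trans _ _ (\sum_(J | J != J1) e * `|c J|)); last first.
    rewrite -big_distrr /= ler_wpM2l ?(ltW e_gt0) // /S [leRHS](bigD1 J1) //=.
    by rewrite lerDr normr_ge0.
  apply: ler_sum => J J_neq_J1; rewrite normrM mulrC.
  have [card_J|/c_homogeneous ->] := eqVneq #|J| n; last by rewrite normr0 !mulr0.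
  rewrite ler_wpM2r // ger0_norm ?small_off_subset_prod ?e_gt0 //.
    by apply: contra J_neq_J1 => sub; rewrite eqEcard sub card_J card_J1 /=.
  by apply/ltW/prodr_gt0 => j _; rewrite /p; case: ifP.
have sq : c J1 * c J1 = a * a by rewrite /a -normrM ger0_norm // -expr2 sqr_ge0.
have : - (a * (a / 2)) <= c J1 * rest.
  by rewrite lerNnormlW // normrM ler_wpM2l // ltW.
nra.
Qed.

Lemma subset_poly_sign_criterion :
  (forall d, posv d -> subset_poly d != 0) <->
  (forall J1 J2, c J1 != 0 -> c J2 != 0 -> Num.sg (c J1) = Num.sg (c J2))
  /\ exists J, c J != 0.
Proof.
split=> [F_neq0|[same_sign [J0 cJ0_neq0]] d]; last exact: subset_poly_neq0 same_sign J0 cJ0_neq0 d.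
split; last first.
  apply/existsP; apply: contraTT (F_neq0 (fun _ => 1) (fun _ => ltr01)).
  move=> /existsPn c0; rewrite negbK /subset_poly big1 // => J _.
  by rewrite (eqP (negPn (c0 J))) mul0r.
move=> J1 J2 cJ1_neq0 cJ2_neq0; apply/eqP/negP => /negP sg_neq.
have [p pp cFp_gt0] := subset_poly_dominant J1 cJ1_neq0.
have [q pq cFq_gt0] := subset_poly_dominant J2 cJ2_neq0.
have c12_lt0 := mul_lt0_of_sg_neq cJ1_neq0 cJ2_neq0 sg_neq.
have Fpq_lt0 : subset_poly p * subset_poly q < 0 by nra.
have [d pd Fd0] := positive_root subset_poly subset_poly_ext subset_poly_affine p q pp pq Fpq_lt0.
by move/eqP: Fd0; apply/negP/F_neq0.
Qed.

End SubsetPolynomial.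
End Multiaffine.

Section SignVectors.
Context {R : realFieldType} {n r : nat} (A : 'M[R]_(n, r)) (B : 'M[R]_(r, n)).

Lemma full_col_rank_inj (y : 'cV[R]_n) : \rank B = n -> B *m y = 0 -> y = 0.
Proof.
move=> rankB By0; apply: trmx_inj; rewrite trmx0.
apply: (row_free_inj (_ : row_free B^T)); first by rewrite /row_free mxrank_tr rankB.
by rewrite mul0mx -trmx_mul By0 trmx0.
Qed.

Lemma sgvec_eq0 (z : 'cV[R]_r) : (sgvec z == sgvec0 r) = (z == 0).
Proof.
apply/eqP/eqP => [sz0|->]; last by apply/ffunP => i; rewrite !ffunE mxE sgz0.
apply/matrixP => i j; rewrite (ord1 j) mxE.
by move/ffunP: sz0 => /(_ i); rewrite !ffunE => /eqP; rewrite sgz_eq0 => /eqP.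
Qed.

Lemma sgvec_diagw (d : 'I_r -> R) (z : 'cV[R]_r) : posv d -> sgvec (diagw d *m z) = sgvec z.
Proof.
by move=> pd; apply/ffunP => i; rewrite !ffunE mul_diag_mx !mxE sgzM gtr0_sgz ?mul1r.
Qed.

Lemma div_gt0_of_sgz_eq (x z : R) : z != 0 -> sgz x = sgz z -> 0 < x / z.
Proof.
case: (ltrgt0P z) => [z_gt0|z_lt0|->] // _ sg_eq.
  by rewrite divr_gt0 // -sgz_gt0 sg_eq sgz_gt0.
by rewrite nmulr_rgt0 ?invr_lt0 // -sgz_lt0 sg_eq sgz_lt0.
Qed.

(* If A D B is singular for a positive diagonal D, a kernel vector y of A D B
   gives x = D B y in ker A with the same (nonzero) signs as B y in im B. *)
Lemma singular_weight_sign_meet (d : 'I_r -> R) : \rank B = n -> posv d ->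
  \det (A *m diagw d *m B) = 0 -> exists2 s, s != sgvec0 r & sg_ker A s /\ sg_im B s.
Proof.
move=> rankB pd /eqP; rewrite -det_tr => /det0P [v v_neq0 v_ker].
pose y := v^T; pose x := diagw d *m (B *m y).
have ADBy0 : A *m diagw d *m B *m y = 0 by rewrite -[_ *m B]trmxK -trmx_mul v_ker trmx0.
exists (sgvec x); last by split; [exists x; rewrite !mulmxA | exists y; rewrite sgvec_diagw].
rewrite sgvec_diagw // sgvec_eq0; apply: contra v_neq0 => /eqP /full_col_rank_inj -/(_ rankB).
by move/(congr1 trmx); rewrite trmxK trmx0 => ->.
Qed.

(* Conversely, a nonzero common sign vector of x in ker A and z = B y yields a
   positive D with D z = x, hence A D B y = 0 with y nonzero. *)
Lemma sign_meet_singular_weight (s : {ffun 'I_r -> int}) :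
  s != sgvec0 r -> sg_ker A s -> sg_im B s ->
  exists2 d, posv d & \det (A *m diagw d *m B) = 0.
Proof.
move=> s_neq0 [x [Ax0 sx]] [y sy]; set z := B *m y in sy.
have sg_xz i : sgz (x i 0) = sgz (z i 0).
  by move/ffunP: sx => /(_ i); move/ffunP: sy => /(_ i); rewrite !ffunE => -> ->.
pose d i := if z i 0 == 0 then 1 else x i 0 / z i 0.
have pd : posv d.
  move=> i; rewrite /d; case: eqP => // /eqP z_neq0.
  exact: div_gt0_of_sgz_eq.
have Dz : diagw d *m z = x.
  apply/matrixP => i j; rewrite (ord1 j) mul_diag_mx mxE [X in X * _]mxE /d.
  case: eqP => [z0|/eqP z_neq0]; last by rewrite divfK.
  by move/eqP: (sg_xz i); rewrite z0 sgz0 sgz_eq0 => /eqP ->; rewrite mulr0.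
exists d => //; apply/eqP; apply: contraNT s_neq0 => det_neq0.
have ADB_unit : A *m diagw d *m B \in unitmx by rewrite unitmxE unitfE.
have ADBy0 : A *m diagw d *m B *m y = 0 by rewrite -!mulmxA -/z Dz.
have y0 : y = 0 by rewrite -(mulKmx ADB_unit y) ADBy0 mulmx0.
by rewrite -sy sgvec_eq0 /z y0 mulmx0.
Qed.

Lemma sign_meet_trivial_iff : \rank B = n ->
  (forall s, (sg_ker A s /\ sg_im B s) <-> s = sgvec0 r) <->
  (forall d, posv d -> \det (A *m diagw d *m B) != 0).
Proof.
move=> rankB; split=> [meet0 d pd|det_neq0 s].
  apply/eqP => /(singular_weight_sign_meet d rankB pd) [s s_neq0 /meet0 s0].
  by rewrite s0 eqxx in s_neq0.
split=> [[sker sim]|->].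
  apply/eqP; apply: contraT => s_neq0.
  have [d pd /eqP] := sign_meet_singular_weight s s_neq0 sker sim.
  by rewrite (negPf (det_neq0 d pd)).
have sgvec00 : sgvec (0 : 'cV[R]_r) = sgvec0 r by apply/eqP; rewrite sgvec_eq0.
by split; [exists 0; rewrite mulmx0 | exists 0; rewrite mulmx0].
Qed.

End SignVectors.

Theorem mainTheorem15 (R : realFieldType) (n r : nat)
  (A : 'M[R]_(n, r)) (B : 'M[R]_(r, n))
  (hA : \rank A = n) (hB : \rank B = n) :
  (forall s : {ffun 'I_r -> int}, (sg_ker A s /\ sg_im B s) <-> s = sgvec0 r)
  <->
  ((forall (J1 J2 : {set 'I_r}) (H1 : #|J1| = n) (H2 : #|J2| = n),
      JProd A B H1 != 0 -> JProd A B H2 != 0 ->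
      Num.sg (JProd A B H1) = Num.sg (JProd A B H2))
   /\ exists (J : {set 'I_r}) (H : #|J| = n), JProd A B H != 0).
Proof.
rewrite (sign_meet_trivial_iff A B hB).
apply: (@iff_trans _ (forall d, posv d -> subset_poly (minor_prod A B) d != 0)).
  by split=> det_neq0 d pd; move: (det_neq0 d pd); rewrite cauchy_binet_weighted.
apply: (iff_trans (subset_poly_sign_criterion _ _ (minor_prod_card A B))).
split=> -[same_sign [J J_neq0]]; split.
- by move=> J1 J2 H1 H2; rewrite -!minor_prodE; apply: same_sign.
- by exists J, (minor_prod_neq0_card _ _ _ J_neq0); rewrite -minor_prodE.
- move=> J1 J2 ne1 ne2.
  have H1 := minor_prod_neq0_card _ _ _ ne1; have H2 := minor_prod_neq0_card _ _ _ ne2.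
  by move: ne1 ne2; rewrite (minor_prodE _ _ _ H1) (minor_prodE _ _ _ H2); apply: same_sign.
- by case: J_neq0 => H JH_neq0; exists J; rewrite (minor_prodE _ _ _ H).
Qed.
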